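(* Let $\Gamma\subsetneqq\mathbb{R}^n$ be an open convex cone with vertex at the origin such that $\{\lambda:\lambda_i>0\ \forall i\}\subset\Gamma\subset\{\lambda:\sum_i\lambda_i>0\}$, and let $f$ be a smooth symmetric function on $\Gamma$ with $\frac{\partial f}{\partial\lambda_i}>0$ in $\Gamma$ for all $i$, $f(a^*(1,\dots,1))=1$ for some $a^*>0$, and $\limsup_{\lambda\to\lambda_0}f(\lambda)<1$ for every $\lambda_0\in\partial\Gamma$. Let $A=\mathrm{diag}(a_1,\dots,a_n)\in\mathcal{A}$ with $0<a_1\leq\cdots\leq a_n$ and $\frac{\partial f}{\partial\lambda_1}(\lambda(A))=\max_i\frac{\partial f}{\partial\lambda_i}(\lambda(A))$. Let $g:[1,\infty)\to\mathbb{R}$ be the unique smooth function with $(g(w),a_2w,\dots,a_nw)\in\Gamma$ and $f(g(w),a_2w,\dots,a_nw)=1$ for $w\geq1$. Let $c_2>1$, let $\delta\geq0$ be such that $$\alpha_\delta=\frac{\sum_{i=1}^na_i\frac{\partial f}{\partial\lambda_i}(\lambda(A))}{(2a_n+\delta)\frac{\partial f}{\partial\lambda_1}(\lambda(A))}>1,$$ and let $w_{c_2,\delta}(s)$ be a solution on $[1,+\infty)$ of $$\frac{dw}{ds}=\frac{g(w)-a_1w}{(2a_n+\delta)s},\qquad w(1)=c_2.$$ Then $\lim_{s\to+\infty}w_{c_2,\delta}(s)=1$ and $w_{c_2,\delta}(s)-1=O(s^{-\alpha_\delta})$ as $s\to+\infty$.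
   Context: $S^+(n)$ is the set of real symmetric positive definite $n\times n$ matrices; for $A\in S^+(n)$, $a=\lambda(A)$ denotes its eigenvalues, $\hat a=\max_ia_i$, $\hat f_\lambda(a)=\max_i\frac{\partial f}{\partial\lambda_i}(a)$, and $\mathcal{A}:=\{A\in S^+(n): f(a)=1,\ \frac{\nabla f(a)\cdot a}{2\hat a\hat f_\lambda(a)}>1\}$. *)

From HB Require Import structures.
From mathcomp Require Import all_boot all_order all_algebra all_fingroup.
From mathcomp Require Import all_classical all_reals all_analysis.
Set Implicit Arguments. Unset Strict Implicit. Unset Printing Implicit Defensive.
Import Order.TTheory GRing.Theory Num.Theory.
Import numFieldNormedType.Exports.
Local Open Scope classical_set_scope.
Local Open Scope ring_scope.

Section Defs.
Variable R : realType.

Definition ej (n : nat) (i : 'I_n) : 'rV[R]_n := delta_mx 0 i.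

Definition partial (n : nat) (i : 'I_n) (f : 'rV[R]_n -> R) : 'rV[R]_n -> R :=
  fun x => 'D_(ej i) f x.

Fixpoint iter_partial (n : nat) (s : seq 'I_n) (f : 'rV[R]_n -> R) :
  'rV[R]_n -> R :=
  match s with
  | [::] => f
  | i :: s' => partial i (iter_partial s' f)
  end.

Definition smooth_on (n : nat) (D : set 'rV[R]_n) (f : 'rV[R]_n -> R) :=
  forall (s : seq 'I_n) (x : 'rV[R]_n), D x ->
    {for x, continuous (iter_partial s f)} /\
    (forall i : 'I_n, derivable (iter_partial s f) x (ej i)).

Definition open_convex_cone (n : nat) (G : set 'rV[R]_n) :=
  open G /\
  (forall x y, G x -> G y -> G (x + y)) /\
  (forall (t : R) x, 0 < t -> G x -> G (t *: x)).

Definition symmetric_on (n : nat) (G : set 'rV[R]_n) (f : 'rV[R]_n -> R) :=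
  forall (s : 'S_n) x, G x -> G (col_perm s x) /\ f (col_perm s x) = f x.

Definition limsup_lt1 (n : nat) (G : set 'rV[R]_n) (f : 'rV[R]_n -> R)
  (x0 : 'rV[R]_n) :=
  exists2 c : R, c < 1 &
    exists2 r : R, 0 < r & forall x, G x -> `|x - x0| < r -> f x <= c.

Definition bdry (n : nat) (G : set 'rV[R]_n) := closure G `\` interior G.

Definition vmax (n : nat) (a : 'rV[R]_n.+1) : R :=
  \big[Num.max/a ord0 ord0]_(i < n.+1) a ord0 i.

Definition fhat (n : nat) (f : 'rV[R]_n.+1 -> R) (a : 'rV[R]_n.+1) : R :=
  \big[Num.max/partial ord0 f a]_(i < n.+1) partial i f a.

Definition grad_dot (n : nat) (f : 'rV[R]_n -> R) (a : 'rV[R]_n) : R :=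
  \sum_(i < n) a ord0 i * partial i f a.

(* A = diag(a) (a matrix with positive eigenvalues a = lambda(A)) lies in
   the set \mathcal A *)
Definition in_Acal (n : nat) (f : 'rV[R]_n.+1 -> R) (a : 'rV[R]_n.+1) :=
  (forall i, 0 < a ord0 i) /\ f a = 1 /\
  grad_dot f a / (2 * vmax a * fhat f a) > 1.

Definition gvec (n : nat) (a : 'rV[R]_n.+1) (g : R -> R) (w : R) :
  'rV[R]_n.+1 :=
  \row_i (if i == ord0 then g w else a ord0 i * w).

End Defs.

(* Write u = w - 1 and h x = g x - a_1 x, so that u' = h (1 + u) / (K s) with
   K = 2 a_n + delta.  As f increases in every variable and
   f (g x, a_2 x, ..., a_n x) = 1 = f a < f (x a) for x > 1, we get h < 0 on
   (1, +oo).  Testing a second-order Taylor expansion of f at a against the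
   point x a + (C u^2 - lam u) e_1, where lam = grad f(a) . a / f_1(a), gives
   h (1 + u) <= - lam u + C u^2 for small u >= 0, and lam = alpha_delta K.
   Hence w decreases to a limit, which is 1: otherwise u' <= - m / s and w
   would eventually drop below 1 like - log s.  Near 1 the Riccati inequality
   u' <= u (c u - alpha) / s makes s^alpha u / (alpha - c u) nonincreasing,
   so u = O(s^-alpha). *)

From HB Require Import structures.
From mathcomp Require Import all_boot all_order all_algebra all_fingroup.
From mathcomp Require Import all_classical all_reals all_analysis.
From mathcomp Require Import ring lra.
Import Order.TTheory GRing.Theory Num.Theory.
Import numFieldNormedType.Exports.
Local Open Scope classical_set_scope.
Local Open Scope ring_scope.
Set Implicit Arguments. Unset Strict Implicit. Unset Printing Implicit Defensive.

Section CoordinateMVT.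
Variables (R : realType) (m : nat).
Implicit Types (F : 'rV[R]_m -> R) (p e x y z : 'rV[R]_m).
Implicit Types (d s t th M : R).

Lemma is_derive_along_line F p e t :
  derivable F (p + t *: e) e ->
  is_derive t 1 (fun s : R => F (p + s *: e)) ('D_e F (p + t *: e)).
Proof.
move=> dF.
have quotE : (fun h : R => h^-1 *: (((fun s : R => F (p + s *: e)) \o shift t) (h *: 1)
      - F (p + t *: e))) =
    (fun h : R => h^-1 *: ((F \o shift (p + t *: e)) (h *: e) - F (p + t *: e))).
  apply/funext => h /=.
  by rewrite [h *: 1]/(GRing.scale _ _) /= mulr1 scalerDl addrCA addrA.
by apply: DeriveDef; rewrite /derivable /derive quotE.
Qed.

Lemma mvt_along_line_pos F p e d : 0 < d ->
  (forall th, 0 <= th <= 1 -> derivable F (p + (th * d) *: e) e) ->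
  exists2 th, 0 <= th <= 1 & F (p + d *: e) - F p = d * 'D_e F (p + (th * d) *: e).
Proof.
move=> d0 dF.
have dF' s : 0 <= s <= d -> is_derive s 1 (fun s => F (p + s *: e)) ('D_e F (p + s *: e)).
  move=> /andP[s0 sd]; apply: is_derive_along_line.
  have -> : s = s / d * d by rewrite divfK ?gt_eqF.
  by apply: dF; rewrite divr_ge0 ?(ltW d0) //= ler_pdivrMr // mul1r.
have dI : {in `]0, d[, forall s : R, is_derive s 1 (fun s : R => F (p + s *: e))
    ('D_e F (p + s *: e))}.
  by move=> s; rewrite in_itv /= => /andP[s0 sd]; apply: dF'; rewrite !ltW.
have cI : {within `[0, d], continuous (fun s => F (p + s *: e))}.
  apply: derivable_within_continuous => s; rewrite in_itv /= => sI.
  by have [] := dF' s sI.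
have [c] := MVT_segment (ltW d0) dI cI.
rewrite in_itv /= scale0r addr0 => /andP[c0 cd] ->.
exists (c / d); last by rewrite divfK ?gt_eqF // mulrC subr0.
by rewrite divr_ge0 ?(ltW d0) //= ler_pdivrMr // mul1r.
Qed.

Lemma mvt_along_line F p e d :
  (forall th, 0 <= th <= 1 -> derivable F (p + (th * d) *: e) e) ->
  exists2 th, 0 <= th <= 1 & F (p + d *: e) - F p = d * 'D_e F (p + (th * d) *: e).
Proof.
move=> dF; case: (ltgtP d 0) => [d0|d0|->]; [|exact: mvt_along_line_pos|].
2: by exists 0; rewrite ?lexx ?ler01 // scale0r addr0 subrr mul0r.
(* going back from [p + d e] to [p] is a step of positive length [- d] *)
have dF' th : 0 <= th <= 1 -> derivable F (p + d *: e + (th * - d) *: e) e.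
  move=> /andP[th0 th1]; rewrite -addrA -scalerDl.
  have -> : d + th * - d = (1 - th) * d by ring.
  by apply: dF; lra.
have nd0 : 0 < - d by rewrite oppr_gt0.
have [th th01 E] := mvt_along_line_pos nd0 dF'.
exists (1 - th); first by move: th01 => /andP[]; lra.
rewrite -addrA -scalerDl subrr scale0r addr0 -addrA -scalerDl in E.
have -> : (1 - th) * d = d + th * - d by ring.
by rewrite -opprB E mulNr opprK.
Qed.

Definition in_box x y z := forall j, exists2 th, 0 <= th <= 1 &
  z ord0 j = x ord0 j + th * (y ord0 j - x ord0 j).

Lemma in_box_trans x y z z' : in_box x y z -> in_box x z z' -> in_box x y z'.
Proof.
move=> xyz xzz' j; have [th /andP[th0 th1] zj] := xyz j.
have [th' /andP[th'0 th'1] ->] := xzz' j.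
by exists (th' * th); [rewrite mulr_ge0 ?mulr_ile1 | rewrite zj; ring].
Qed.

Lemma in_box_dist x y z j : in_box x y z ->
  `|z ord0 j - x ord0 j| <= `|y ord0 j - x ord0 j|.
Proof.
move=> /(_ j) [th /andP[th0 th1] ->].
by rewrite addrAC subrr add0r normrM (ger0_norm th0) ler_piMl.
Qed.

Definition prefix_mix x y (k : nat) : 'rV[R]_m :=
  \row_j (if (j < k)%N then y ord0 j else x ord0 j).

Lemma prefix_mix0 x y : prefix_mix x y 0 = x.
Proof. by apply/rowP => j; rewrite mxE ltn0. Qed.

Lemma prefix_mix_all x y : prefix_mix x y m = y.
Proof. by apply/rowP => j; rewrite mxE ltn_ord. Qed.

Lemma prefix_mixS x y (k : 'I_m) (d : R) :
  prefix_mix x y k + d *: ej R k =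
  \row_j (if (j < k)%N then y ord0 j else if j == k then x ord0 k + d else x ord0 j).
Proof.
apply/rowP => j; rewrite !mxE eqxx /=.
have [->|jk] := eqVneq j k; first by rewrite ltnn mulr1.
by rewrite mulr0 addr0.
Qed.

Lemma prefix_mix_step x y (k : 'I_m) :
  prefix_mix x y k.+1 = prefix_mix x y k + (y ord0 k - x ord0 k) *: ej R k.
Proof.
rewrite prefix_mixS; apply/rowP => j; rewrite !mxE.
have [->|jk] := eqVneq j k; first by rewrite ltnSn ltnn addrC subrK.
by rewrite ltnS leq_eqVlt val_eqE (negbTE jk).
Qed.

Lemma in_box_prefix_mix x y (k : 'I_m) th : 0 <= th <= 1 ->
  in_box x y (prefix_mix x y k + (th * (y ord0 k - x ord0 k)) *: ej R k).
Proof.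
move=> th01 j; rewrite prefix_mixS mxE.
case: ifP => _; first by exists 1; rewrite ?ler01 ?lexx // mul1r addrC subrK.
case: eqP => [->|_]; first by exists th.
by exists 0; rewrite ?ler01 ?lexx // mul0r addr0.
Qed.

Lemma coord_mvt F x y : (forall z k, in_box x y z -> derivable F z (ej R k)) ->
  exists2 xi : 'I_m -> 'rV[R]_m, forall k, in_box x y (xi k) &
    F y - F x = \sum_(k < m) (y ord0 k - x ord0 k) * partial k F (xi k).
Proof.
move=> dF.
have step (k : 'I_m) : exists z, in_box x y z /\
    F (prefix_mix x y k.+1) - F (prefix_mix x y k) = (y ord0 k - x ord0 k) * partial k F z.
  rewrite prefix_mix_step.
  have [th th01 ->] := mvt_along_line
    (fun th th01 => dF _ k (@in_box_prefix_mix x y k th th01)).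
  by exists (prefix_mix x y k + (th * (y ord0 k - x ord0 k)) *: ej R k);
    split; first exact: in_box_prefix_mix.
have [xi xiP] := choice step.
exists xi => [k|]; first by case: (xiP k).
rewrite -[in LHS](prefix_mix_all x y) -[X in _ - F X](prefix_mix0 x y).
rewrite -(telescope_sumr (fun k => F (prefix_mix x y k)) (leq0n m)) big_mkord.
by apply: eq_bigr => k _; case: (xiP k).
Qed.

Lemma coord_mvt_le F x y M :
  (forall z k, in_box x y z -> derivable F z (ej R k)) ->
  (forall z k, in_box x y z -> `|partial k F z| <= M) ->
  `|F y - F x| <= M * \sum_k `|y ord0 k - x ord0 k|.
Proof.
move=> dF bF; have [xi xiB ->] := coord_mvt dF.
rewrite mulr_sumr; apply: (le_trans (ler_norm_sum _ _ _)); apply: ler_sum => k _.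
by rewrite normrM mulrC ler_wpM2r ?bF.
Qed.

Lemma taylor1_remainder_le F x y M :
  (forall z k, in_box x y z -> derivable F z (ej R k)) ->
  (forall z i k, in_box x y z -> derivable (partial i F) z (ej R k)) ->
  (forall z i k, in_box x y z -> `|partial k (partial i F) z| <= M) ->
  `|F y - F x - \sum_k (y ord0 k - x ord0 k) * partial k F x| <=
    M * (\sum_k `|y ord0 k - x ord0 k|) ^+ 2.
Proof.
move=> dF d2F bF; have [xi xiB ->] := coord_mvt dF.
set S : R := \sum_(k < m) `|y ord0 k - x ord0 k|.
rewrite -sumrB expr2 mulrA mulr_sumr.
apply: (le_trans (ler_norm_sum _ _ _)); apply: ler_sum => k _.
rewrite -mulrBr normrM mulrC ler_wpM2r //.
have xiP z : in_box x (xi k) z -> in_box x y z by apply: in_box_trans.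
apply: (le_trans (coord_mvt_le (fun z j xz => d2F z k j (xiP z xz))
  (fun z j xz => bF z k j (xiP z xz)))).
have M0 : 0 <= M := le_trans (normr_ge0 _) (bF _ k k (xiB k)).
by rewrite ler_wpM2l // ler_sum // => j _; apply: in_box_dist.
Qed.

End CoordinateMVT.

Section Neighbourhoods.
Variable R : realType.

Lemma near_bounded_fin (T : topologicalType) (I : finType) (F : I -> T -> R) (a : T) :
  (forall i, {for a, continuous (F i)}) ->
  exists2 M : R, 0 <= M & \forall x \near a, forall i, `|F i x| <= M.
Proof.
move=> Fc; exists (\sum_i (`|F i a| + 1)).
  by rewrite sumr_ge0 // => i _; rewrite addr_ge0.
apply: filter_forall => i; have := Fc i => /cvgrPdist_lt /(_ 1 ltr01).
apply: filterS => x Fx.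
have -> : F i x = F i a - (F i a - F i x) by rewrite opprB addrC subrK.
apply: (le_trans (ler_normB _ _)); rewrite (bigD1 i) //= -addrA lerD2l.
by rewrite (le_trans (ltW Fx)) // lerDl sumr_ge0 // => j _; rewrite addr_ge0.
Qed.

Lemma nbhs_row_box m (a : 'rV[R]_m) (P : set 'rV[R]_m) : nbhs a P ->
  exists2 r : R, 0 < r & forall x : 'rV[R]_m,
    (forall j, `|a ord0 j - x ord0 j| < r) -> P x.
Proof.
move=> /nbhs_ballP[r r0 rP]; exists r => // x ax; apply: rP.
rewrite -ball_normE /ball_ /= [X in X < _]mx_normrE; apply: bigmax_lt => // -[i j] _ /=.
by rewrite (ord1 i) !mxE; apply: ax.
Qed.

End Neighbourhoods.

Section ConvexCone.
Variables (R : realType) (m : nat) (Gamma : set 'rV[R]_m) (f : 'rV[R]_m -> R).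
Hypothesis Gcone : open_convex_cone Gamma.

Lemma cone_segment p q th : Gamma p -> Gamma q -> 0 <= th <= 1 ->
  Gamma ((1 - th) *: p + th *: q).
Proof.
case: Gcone => _ [Gadd Gscale] Gp Gq /andP[th0 th1].
have [->|th_neq0] := eqVneq th 0; first by rewrite subr0 scale1r scale0r addr0.
have [->|th_neq1] := eqVneq th 1; first by rewrite subrr scale0r add0r scale1r.
by apply: Gadd; apply: Gscale; rewrite // ?subr_gt0 lt_neqAle ?th_neq1 // eq_sym th_neq0.
Qed.

Lemma coord_le_mono (i : 'I_m) p q :
  (forall z, Gamma z -> derivable f z (ej R i)) ->
  (forall z, Gamma z -> 0 < partial i f z) ->
  Gamma p -> Gamma q -> (forall j, j != i -> p ord0 j = q ord0 j) ->
  (f p <= f q) = (p ord0 i <= q ord0 i).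
Proof.
move=> df fi_pos Gp Gq pq.
have segE th : p + (th * (q ord0 i - p ord0 i)) *: ej R i = (1 - th) *: p + th *: q.
  apply/matrixP => r j; rewrite (ord1 r) !mxE eqxx /=.
  have [->|ji] := eqVneq j i; first by rewrite mulr1n mulr1; ring.
  by rewrite mulr0n mulr0 addr0 (pq _ ji); ring.
have dseg th : 0 <= th <= 1 ->
    derivable f (p + (th * (q ord0 i - p ord0 i)) *: ej R i) (ej R i).
  by move=> th01; rewrite segE; apply/df/cone_segment.
have [th th01] := mvt_along_line dseg.
have := segE 1; rewrite mul1r subrr scale0r add0r scale1r => ->.
rewrite segE => E; have fi_th := fi_pos _ (cone_segment Gp Gq th01).
by rewrite -subr_ge0 E pmulr_lge0 // subr_ge0.
Qed.

Lemma coord_lt_mono (i : 'I_m) p q :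
  (forall z, Gamma z -> derivable f z (ej R i)) ->
  (forall z, Gamma z -> 0 < partial i f z) ->
  Gamma p -> Gamma q -> (forall j, j != i -> p ord0 j = q ord0 j) ->
  (f p < f q) = (p ord0 i < q ord0 i).
Proof.
move=> df fi_pos Gp Gq pq.
by rewrite !ltNge (coord_le_mono df fi_pos Gq Gp) // => j /pq.
Qed.

End ConvexCone.

Lemma sum_delta0 (R : pzRingType) m (F : 'I_m.+1 -> R) :
  \sum_j (j == ord0)%:R * F j = F ord0.
Proof.
by rewrite (bigD1 ord0) //= mul1r big1 ?addr0 // => j /negbTE ->; rewrite mul0r.
Qed.

Section LevelSet.
Variables (R : realType) (n : nat) (Gamma : set 'rV[R]_n.+1)
  (f : 'rV[R]_n.+1 -> R) (a : 'rV[R]_n.+1) (g : R -> R).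
Hypothesis Gcone : open_convex_cone Gamma.
Hypothesis Gpos : [set x : 'rV[R]_n.+1 | forall i, 0 < x ord0 i] `<=` Gamma.
Hypothesis fsmooth : smooth_on Gamma f.
Hypothesis fincr : forall x i, Gamma x -> 0 < partial i f x.
Hypothesis apos : forall i, 0 < a ord0 i.
Hypothesis fa1 : f a = 1.
Hypothesis glevel : forall x, 1 <= x -> Gamma (gvec a g x) /\ f (gvec a g x) = 1.
Implicit Types (x r M : R) (q y : 'rV[R]_n.+1) (j : 'I_n.+1).

Let df z k : Gamma z -> derivable f z (ej R k).
Proof. by move=> Gz; case: (fsmooth [::] Gz) => _. Qed.

Let Ga : Gamma a. Proof. exact: Gpos. Qed.

Let gvec_off0 x q : (forall j, j != ord0 -> q ord0 j = a ord0 j * x) ->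
  forall j, j != ord0 -> gvec a g x ord0 j = q ord0 j.
Proof. by move=> qE j j0; rewrite mxE (negbTE j0) qE. Qed.

Lemma level_le_coord0 x q : 1 <= x -> Gamma q ->
  (forall j, j != ord0 -> q ord0 j = a ord0 j * x) ->
  (1 <= f q) = (g x <= q ord0 ord0).
Proof.
move=> x1 Gq qE; have [Gg <-] := glevel x1.
rewrite (coord_le_mono Gcone (df^~ _) (fincr^~ _) Gg Gq (gvec_off0 qE)).
by rewrite mxE eqxx.
Qed.

Lemma level_lt_coord0 x q : 1 <= x -> Gamma q ->
  (forall j, j != ord0 -> q ord0 j = a ord0 j * x) ->
  (1 < f q) = (g x < q ord0 ord0).
Proof.
move=> x1 Gq qE; have [Gg <-] := glevel x1.
rewrite (coord_lt_mono Gcone (df^~ _) (fincr^~ _) Gg Gq (gvec_off0 qE)).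
by rewrite mxE eqxx.
Qed.

Lemma g_lt_linear x : 1 < x -> g x < a ord0 ord0 * x.
Proof.
move=> x1; have x0 : 0 < x := lt_trans ltr01 x1.
have Gxa : Gamma (x *: a) by apply: Gpos => j; rewrite mxE mulr_gt0.
have -> : a ord0 ord0 * x = (x *: a) ord0 ord0 by rewrite mxE mulrC.
rewrite -level_lt_coord0 ?ltW // => [|j _]; last by rewrite mxE mulrC.
have a_lt j : a ord0 j < (x *: a) ord0 j by rewrite mxE ltr_pMl.
have inG z : in_box a (x *: a) z -> Gamma z.
  move=> az; apply: Gpos => j; have [th /andP[th0 _] ->] := az j.
  by rewrite (lt_le_trans (apos j)) // lerDl mulr_ge0 // subr_ge0 ltW.
have [xi xiB] := coord_mvt (fun z k az => @df z k (inG z az)).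
rewrite -fa1 -subr_gt0 => ->; rewrite big_ord_recl ltr_pwDl ?sumr_ge0 // => [|k _].
  by rewrite mulr_gt0 ?subr_gt0 //; apply/fincr/inG.
by rewrite mulr_ge0 ?subr_ge0 ?ltW //; apply/fincr/inG.
Qed.

Lemma second_partials_bounded : exists2 r : R, 0 < r & exists2 M : R, 0 <= M &
  forall x : 'rV[R]_n.+1, (forall j, `|a ord0 j - x ord0 j| < r) ->
    Gamma x /\ forall i k, `|partial k (partial i f) x| <= M.
Proof.
have [M M0 near_M] := @near_bounded_fin R _ _
  (fun ik : 'I_n.+1 * 'I_n.+1 => partial ik.2 (partial ik.1 f)) a
  (fun ik => (fsmooth [:: ik.2; ik.1] Ga).1).
have near_G : \forall x \near a, Gamma x.
  by apply: open_nbhs_nbhs; split => //; case: Gcone.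
have [r r0 rP] := nbhs_row_box (filterI near_G near_M).
by exists r => //; exists M => // x /rP[Gx xM]; split => // i k; apply: (xM (i, k)).
Qed.

Lemma f_taylor_ge r M y :
  (forall x : 'rV[R]_n.+1, (forall j, `|a ord0 j - x ord0 j| < r) ->
    Gamma x /\ forall i k, `|partial k (partial i f) x| <= M) ->
  (forall j, `|a ord0 j - y ord0 j| < r) ->
  1 + \sum_k (y ord0 k - a ord0 k) * partial k f a
    - M * (\sum_k `|y ord0 k - a ord0 k|) ^+ 2 <= f y.
Proof.
move=> rM ay.
have inU z : in_box a y z -> Gamma z /\ forall i k, `|partial k (partial i f) z| <= M.
  move=> az; apply: rM => j; rewrite distrC.
  by apply: le_lt_trans (in_box_dist j az) _; rewrite distrC.
have := taylor1_remainder_le (fun z k az => @df z k (inU z az).1)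
  (fun z i k az => (fsmooth [:: i] (inU z az).1).2 k) (fun z i k az => (inU z az).2 i k).
by rewrite ler_norml fa1 => /andP[+ _]; lra.
Qed.

Lemma test_point_sub x c j :
  (x *: a + c *: ej R ord0) ord0 j - a ord0 j = (x - 1) * a ord0 j + (j == ord0)%:R * c.
Proof. by rewrite !mxE eqxx /=; ring. Qed.

Lemma test_point_first_order x c :
  \sum_k ((x *: a + c *: ej R ord0) ord0 k - a ord0 k) * partial k f a =
    (x - 1) * grad_dot f a + c * partial ord0 f a.
Proof.
under eq_bigr do rewrite test_point_sub mulrDl -!mulrA.
by rewrite big_split /= sum_delta0 -mulr_sumr.
Qed.

Lemma test_point_dist x c : 1 <= x ->
  \sum_j `|(x *: a + c *: ej R ord0) ord0 j - a ord0 j| <=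
    (x - 1) * \sum_j a ord0 j + `|c|.
Proof.
rewrite -subr_ge0 => u0; under eq_bigr do rewrite test_point_sub.
apply: (le_trans (ler_sum _ (fun j _ => ler_normD _ _))); rewrite big_split /=.
under eq_bigr do rewrite normrM (ger0_norm u0) (gtr0_norm (apos _)).
under [X in _ + X]eq_bigr do rewrite normrM normr_nat.
by rewrite -mulr_sumr sum_delta0.
Qed.

Lemma g_le_test_point r M x c :
  (forall z : 'rV[R]_n.+1, (forall j, `|a ord0 j - z ord0 j| < r) ->
    Gamma z /\ forall i k, `|partial k (partial i f) z| <= M) ->
  1 <= x -> (forall j, `|a ord0 j - (x *: a + c *: ej R ord0) ord0 j| < r) ->
  M * (\sum_j `|(x *: a + c *: ej R ord0) ord0 j - a ord0 j|) ^+ 2 <=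
    (x - 1) * grad_dot f a + c * partial ord0 f a ->
  g x <= a ord0 ord0 * x + c.
Proof.
move=> rM x1 y_near rem_le; have [Gy _] := rM _ y_near.
have : 1 <= f (x *: a + c *: ej R ord0).
  by have := f_taylor_ge rM y_near; rewrite test_point_first_order; lra.
rewrite (@level_le_coord0 x) // => [|j j0]; last first.
  by rewrite !mxE (negbTE j0) /= mulr0 addr0 mulrC.
by rewrite !mxE eqxx /= mulr1 mulrC.
Qed.

Lemma g_taylor_le : exists2 u0 : R, 0 < u0 & exists2 C : R, 0 <= C &
  forall x, 1 <= x <= 1 + u0 -> g x - a ord0 ord0 * x <=
    - (grad_dot f a / partial ord0 f a) * (x - 1) + C * (x - 1) ^+ 2.
Proof.
have [r r0 [M M0 rM]] := second_partials_bounded.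
set f1 := partial ord0 f a; have f1_gt0 : 0 < f1 by apply: fincr.
have grad_ge0 : 0 <= grad_dot f a.
  by apply: sumr_ge0 => i _; rewrite mulr_ge0 ?ltW ?fincr.
set lam := grad_dot f a / f1; have lam0 : 0 <= lam by rewrite divr_ge0 // ltW.
set D := \sum_j a ord0 j + 1 + lam.
have D_gt0 : 0 < D.
  by rewrite /D -addrA ltr_wpDl ?sumr_ge0 ?ltr_pwDl // => j _; apply/ltW.
set C := M * D ^+ 2 / f1 + 1.
have C_ge1 : 1 <= C by rewrite /C lerDr divr_ge0 ?mulr_ge0 ?sqr_ge0 // ltW.
exists (Num.min C^-1 (r / (2 * D))).
  by rewrite lt_min invr_gt0 (lt_le_trans ltr01 C_ge1) divr_gt0 ?mulr_gt0.
exists C => [|x /andP[x1]]; first lra.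
rewrite -lerBlDl le_min => /andP[uC uD]; set u := x - 1 in uC uD *.
have u0 : 0 <= u by rewrite subr_ge0.
have C_gt0 : 0 < C by apply: lt_le_trans C_ge1.
have Cu : C * u <= 1 by rewrite -(mulfV (lt0r_neq0 C_gt0)) ler_pM2l.
have Du : D * u < r.
  have : D * u <= D * (r / (2 * D)) by rewrite ler_pM2l.
  have -> : D * (r / (2 * D)) = r / 2 by field; rewrite gt_eqF.
  lra.
set c := C * u ^+ 2 - lam * u.
(* chosen so that the first-order part of [f y - f a] is [C f1 u^2] *)
pose y := x *: a + c *: ej R ord0.
have dist_y : \sum_j `|y ord0 j - a ord0 j| <= D * u.
  apply: (le_trans (test_point_dist _ x1)); rewrite -/u.
  have : `|c| <= C * u ^+ 2 + lam * u.
    apply: (le_trans (ler_normB _ _)).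
    by rewrite !ger0_norm // mulr_ge0 ?sqr_ge0 // ltW.
  have : C * u ^+ 2 <= u by rewrite expr2 mulrA ler_piMl.
  rewrite /D; nra.
have y_near j : `|a ord0 j - y ord0 j| < r.
  rewrite distrC; apply: le_lt_trans Du; apply: le_trans dist_y.
  by rewrite (bigD1 j) //= lerDl sumr_ge0.
suff : g x <= a ord0 ord0 * x + c by rewrite /c; lra.
apply: (g_le_test_point rM x1 y_near).
have : (\sum_k `|y ord0 k - a ord0 k|) ^+ 2 <= (D * u) ^+ 2.
  by rewrite !expr2 ler_pM // sumr_ge0.
have -> : u * grad_dot f a + c * f1 = (M * D ^+ 2 + f1) * u ^+ 2.
  by rewrite /c /lam /C; field; rewrite gt_eqF.
have := mulr_ge0 (ltW f1_gt0) (sqr_ge0 u); nra.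
Qed.

End LevelSet.

Section DifferentialInequalities.
Variable R : realType.

Lemma nonincreasing_of_derive (F dF : R -> R) (s0 : R) :
  (forall s, s0 <= s -> is_derive s 1 F (dF s)) ->
  (forall s, s0 < s -> dF s <= 0) ->
  forall s t, s0 <= s -> s <= t -> F t <= F s.
Proof.
move=> DF dF_le0; apply: ler0_derive1_nincry.
- by move=> s; rewrite in_itv /= andbT => /ltW /DF [].
- move=> s; rewrite in_itv /= andbT derive1E => s0s.
  by have [_ ->] := DF s (ltW s0s); apply: dF_le0.
- by apply: derivable_within_continuous => s; rewrite in_itv /= andbT => /DF [].
Qed.

Lemma is_derive_powR (b s : R) : 0 < s ->
  is_derive s 1 (@powR R ^~ b) (b * s `^ (b - 1)).
Proof.
move=> s0; apply: DeriveDef; first by apply: derivable_powR; rewrite in_itv /= andbT.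
by rewrite -derive1E powR_derive1 // in_itv /= andbT.
Qed.

Lemma riccati_power_decay (u du : R -> R) (alpha c s0 : R) :
  0 < alpha -> 0 <= c -> 0 < s0 ->
  (forall t, s0 <= t -> is_derive t 1 u (du t)) ->
  (forall t, s0 <= t -> 0 <= u t /\ c * u t < alpha) ->
  (forall t, s0 < t -> du t <= u t * (c * u t - alpha) / t) ->
  exists C0, forall t, s0 <= t -> u t <= C0 * t `^ (- alpha).
Proof.
move=> alpha0 c0 s00 Du u_small du_le.
have t_gt0 t : s0 <= t -> 0 < t by move/(lt_le_trans s00).
(* [Q] is constant along solutions of [u' = u (c u - alpha) / t] *)
pose Q t := t `^ alpha * (u t / (alpha - c * u t)).
have DQ t : s0 <= t -> is_derive t 1 Q
    (t `^ alpha / (alpha - c * u t) ^+ 2 * (alpha * u t * (alpha - c * u t) / t + alpha * du t)).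
  move=> s0t; have [_ cu] := u_small t s0t.
  have den0 : alpha - c * u t != 0 by rewrite subr_eq0 gt_eqF.
  apply: is_derive_eq.
    apply: is_deriveM; first exact: is_derive_powR (t_gt0 _ s0t).
    apply: is_deriveM; first exact: Du.
    apply: is_deriveV => //; apply: is_deriveB; apply: is_deriveZ; exact: Du.
  have tn0 : t != 0 by rewrite gt_eqF ?t_gt0.
  rewrite /= powRB ?tn0 ?implybT // powRr1 ?(ltW (t_gt0 _ s0t)) //.
  rewrite /GRing.scale /=.
  by field; rewrite tn0 den0.
have Q_le t : s0 <= t -> Q t <= Q s0.
  apply: (nonincreasing_of_derive DQ) => // s s0s.
  have [u0 cu] := u_small s (ltW s0s).
  rewrite mulr_ge0_le0 ?divr_ge0 ?powR_ge0 ?sqr_ge0 //.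
  have -> : alpha * u s * (alpha - c * u s) / s = - (alpha * (u s * (c * u s - alpha) / s)).
    by ring.
  by rewrite addrC subr_le0 ler_pM2l ?du_le.
have [u0 cu0] := u_small s0 (lexx _).
have Q0 : 0 <= Q s0 by rewrite mulr_ge0 ?powR_ge0 ?divr_ge0 // subr_ge0 ltW.
exists (alpha * Q s0) => t s0t; have [ut cut] := u_small t s0t.
have tpow_gt0 : 0 < t `^ alpha by rewrite powR_gt0 ?t_gt0.
rewrite powRN ler_pdivlMr // mulrC.
have := Q_le t s0t; rewrite {1}/Q mulrA ler_pdivrMr ?subr_gt0 // => /le_trans; apply.
by rewrite mulrC ler_wpM2r // gerBl mulr_ge0.
Qed.

End DifferentialInequalities.

Section DecayingODE.
Variables (R : realType) (h w : R -> R) (K alpha : R).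
Hypothesis K_gt0 : 0 < K.
Hypothesis alpha_gt0 : 0 < alpha.
Hypothesis h_cont : forall x, 1 < x -> {for x, continuous h}.
Hypothesis h_lt0 : forall x, 1 < x -> h x < 0.
Hypothesis h_taylor : exists2 u0 : R, 0 < u0 & exists2 C : R, 0 <= C &
  forall x, 1 <= x <= 1 + u0 -> h x <= - (alpha * K) * (x - 1) + C * (x - 1) ^+ 2.
Hypothesis w_ge1 : forall s, 1 <= s -> 1 <= w s.
Hypothesis w_ode : forall s, 1 < s ->
  derivable w s 1 /\ derive1 w s = h (w s) / (K * s).
Implicit Types (s t x : R).

Let w_is_derive (s : R) : 1 < s -> is_derive s 1 w (derive1 w s).
Proof. by move=> s1; rewrite derive1E; apply: derivableP; case: (w_ode s1). Qed.

Lemma h_le0 x : 1 <= x -> h x <= 0.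
Proof.
rewrite le_eqVlt => /orP[/eqP <-|/h_lt0/ltW //].
have [u0 u0_gt0 [C _ hC]] := h_taylor.
by have := hC 1; rewrite lexx lerDl ltW // subrr expr0n /= !mulr0 addr0; apply.
Qed.

Lemma w_nonincreasing s t : 1 < s -> s <= t -> w t <= w s.
Proof.
move=> s1; apply: (nonincreasing_of_derive (s0 := s)) => // [r sr|r sr].
  by apply: w_is_derive; apply: lt_le_trans sr.
have r1 := lt_trans s1 sr; rewrite (w_ode r1).2 pmulr_lle0 ?h_le0 ?w_ge1 ?ltW //.
by rewrite invr_gt0 mulr_gt0 // (lt_trans ltr01).
Qed.

Let E := w @` [set s | 1 < s].

Let has_inf_E : has_inf E.
Proof.
split; first by exists (w 2), 2 => //=; rewrite ltr1n.
by exists 1 => _ [s /= s1 <-]; apply/w_ge1/ltW.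
Qed.

Lemma w_cvg_inf : w s @[s --> +oo] --> inf E.
Proof.
apply/cvgrPdist_lt => eps eps0.
have [_ [s1 /= s11 <-] ws1] := inf_adherent eps0 has_inf_E.
exists s1; split; first exact: num_real.
move=> t s1t; have t1 := lt_trans s11 s1t.
have infE_le : inf E <= w t by apply: ge_inf; [case: has_inf_E | exists t].
have := w_nonincreasing s11 (ltW s1t).
by rewrite distrC ger0_norm ?subr_ge0 //; lra.
Qed.

Lemma inf_w_eq1 : inf E = 1.
Proof.
set l := inf E.
have l_ge1 : 1 <= l by apply: lb_le_inf => [|_ [s /= s1 <-]]; [case: has_inf_E | apply/w_ge1/ltW].
apply/eqP; rewrite eq_le l_ge1 andbT leNgt; apply/negP => l_gt1.
set m := - h l / 2.
have m_gt0 : 0 < m by rewrite divr_gt0 // oppr_gt0 h_lt0.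
have := cvg_comp _ _ w_cvg_inf (h_cont l_gt1).
move=> /cvgrPdist_lt /(_ m m_gt0) [s1 [_ hs1]].
set s2 := Num.max s1 1 + 1.
have s12 : s1 < s2 by rewrite /s2 ltr_pwDr // le_max lexx.
have s2_gt1 : 1 < s2 by rewrite /s2 ltr_pwDr // le_max lexx orbT.
(* [w + (m / K) ln] is nonincreasing, which is incompatible with [w >= 1] *)
pose F := w + (m / K) *: (@ln R).
have DF t : s2 <= t -> is_derive t 1 F (derive1 w t + (m / K) *: t^-1).
  move=> s2t; have t1 := lt_le_trans s2_gt1 s2t.
  by apply: is_deriveD; [exact: w_is_derive | apply/is_deriveZ/is_derive1_ln/(lt_trans ltr01)].
have DF_le0 t : s2 < t -> derive1 w t + (m / K) *: t^-1 <= 0.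
  move=> s2t; have t1 := lt_trans s2_gt1 s2t; have t0 := lt_trans ltr01 t1.
  have := hs1 t (lt_trans s12 s2t); rewrite /= ltr_distlC => /andP[_ hwt].
  have -> : (m / K) *: t^-1 = m / (K * t) by rewrite invfM mulrA.
  rewrite (w_ode t1).2 -mulrDl pmulr_lle0 ?invr_gt0 ?mulr_gt0 //.
  by rewrite /m in hwt *; lra.
set T := expR (w s2 * (K / m) + ln s2).
have s2_gt0 : 0 < s2 := lt_trans ltr01 s2_gt1.
have s2T : s2 <= T.
  have ws2 : 0 <= w s2 := le_trans ler01 (w_ge1 (ltW s2_gt1)).
  by rewrite /T -{1}(lnK s2_gt0) ler_expR lerDr mulr_ge0 // divr_ge0 // ltW.
have := nonincreasing_of_derive DF DF_le0 (lexx s2) s2T.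
have Fval t : F t = w t + m / K * ln t by [].
rewrite !Fval /T expRK.
have -> : m / K * (w s2 * (K / m) + ln s2) = w s2 + m / K * ln s2.
  by field; rewrite !gt_eqF.
have := w_ge1 (le_trans (ltW s2_gt1) s2T); lra.
Qed.

Lemma w_cvg1 : w s @[s --> +oo] --> (1 : R).
Proof. by rewrite -inf_w_eq1; exact: w_cvg_inf. Qed.

Lemma w_power_decay :
  exists C0 : R, \forall s \near +oo, `|w s - 1| <= C0 * s `^ (- alpha).
Proof.
have [u0 u0_gt0 [C C_ge0 hC]] := h_taylor.
set c := C / K; have c_ge0 : 0 <= c by rewrite divr_ge0 // ltW.
set u1 := Num.min u0 (alpha / (c + 1)).
have u1_gt0 : 0 < u1 by rewrite lt_min u0_gt0 divr_gt0 // ltr_wpDl.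
have cu1 : c * u1 < alpha.
  apply: (le_lt_trans (y := c * (alpha / (c + 1)))); first by rewrite ler_wpM2l // ge_min lexx orbT.
  by rewrite mulrA ltr_pdivrMr ?ltr_wpDl // mulrC ltr_pM2l // ltrDl.
have [M [_ hM]] := (cvgrPdist_lt _ _).1 w_cvg1 u1 u1_gt0.
set s0 := Num.max M 1 + 1.
have s0M : M < s0 by rewrite /s0 ltr_pwDr // le_max lexx.
have s0_gt1 : 1 < s0 by rewrite /s0 ltr_pwDr // le_max lexx orbT.
have w_near t : s0 <= t -> 1 < t /\ 0 <= w t - 1 <= u1.
  move=> s0t; have t1 := lt_le_trans s0_gt1 s0t.
  have wt1 : 1 <= w t by apply/w_ge1/ltW.
  have := hM t (lt_le_trans s0M s0t); rewrite distrC ger0_norm ?subr_ge0 // => /ltW ->.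
  by rewrite wt1.
pose u := w - cst 1; have uE t : u t = w t - 1 by [].
have s0_gt0 : 0 < s0 := lt_trans ltr01 s0_gt1.
have Du t : s0 <= t -> is_derive t 1 u (derive1 w t).
  move=> s0t; have [t1 _] := w_near t s0t.
  by apply: is_derive_eq; [apply: is_deriveB; exact: w_is_derive | rewrite subr0].
have u_small t : s0 <= t -> 0 <= u t /\ c * u t < alpha.
  move=> s0t; have [_ /andP[u_ge0 u_le]] := w_near t s0t; split => //.
  by apply: le_lt_trans cu1; apply: ler_wpM2l.
have du_le t : s0 < t -> derive1 w t <= u t * (c * u t - alpha) / t.
  move=> s0t; have [t1 /andP[u_ge0 u_le]] := w_near t (ltW s0t).
  have t_gt0 := lt_trans ltr01 t1.
  have -> : u t * (c * u t - alpha) / t =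
      (- (alpha * K) * (w t - 1) + C * (w t - 1) ^+ 2) / (K * t).
    by rewrite uE /c; field; rewrite !gt_eqF.
  rewrite (w_ode t1).2 ler_pM2r ?invr_gt0 ?mulr_gt0 //.
  by apply: hC; rewrite -lerBlDl -subr_ge0 u_ge0 (le_trans u_le) // ge_min lexx.
have [C0 decay] := riccati_power_decay alpha_gt0 c_ge0 s0_gt0 Du u_small du_le.
exists C0; exists s0; split; first exact: num_real.
move=> t /ltW s0t; have [_ /andP[u_ge0 _]] := w_near t s0t.
by rewrite ger0_norm // -uE decay.
Qed.

End DecayingODE.

Unset Implicit Arguments. Set Strict Implicit. Set Printing Implicit Defensive.

Theorem lemma2p4 (R : realType) (n : nat)
  (Gamma : set 'rV[R]_n.+1) (f : 'rV[R]_n.+1 -> R)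
  (a : 'rV[R]_n.+1) (g : R -> R) (c2 delta : R) (w : R -> R) :
  (* Gamma: proper open convex cone, Gamma_n subset Gamma subset Gamma_1 *)
  open_convex_cone Gamma ->
  Gamma <> [set: 'rV[R]_n.+1] ->
  [set x : 'rV[R]_n.+1 | forall i, 0 < x ord0 i] `<=` Gamma ->
  Gamma `<=` [set x : 'rV[R]_n.+1 | 0 < \sum_i x ord0 i] ->
  (* f smooth, symmetric, strictly increasing in each variable *)
  smooth_on Gamma f ->
  symmetric_on Gamma f ->
  (forall x i, Gamma x -> 0 < partial i f x) ->
  (exists2 astar : R, 0 < astar & f (const_mx astar) = 1) ->
  (forall x0, bdry Gamma x0 -> limsup_lt1 Gamma f x0) ->
  (* A = diag(a) in \mathcal A, 0 < a_1 <= ... <= a_n, f_1 = max_i f_i *)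
  in_Acal f a ->
  0 < a ord0 ord0 ->
  (forall i j : 'I_n.+1, (i <= j)%N -> a ord0 i <= a ord0 j) ->
  partial ord0 f a = fhat f a ->
  (* g *)
  (forall x, 1 <= x -> Gamma (gvec a g x) /\ f (gvec a g x) = 1) ->
  {within `[1, +oo[, continuous g} ->
  (forall k x, 1 < x -> derivable (iter k (fun h : R -> R => derive1 h) g) x 1) ->
  (* parameters *)
  1 < c2 -> 0 <= delta ->
  let alpha := grad_dot f a / ((2 * a ord0 ord_max + delta) * partial ord0 f a) in
  1 < alpha ->
  (* w solves the ODE on [1, +oo) *)
  (forall s, 1 <= s -> 1 <= w s) ->
  {within `[1, +oo[, continuous w} ->
  (forall s, 1 < s -> derivable w s 1 /\
     derive1 w s = (g (w s) - a ord0 ord0 * w s) / ((2 * a ord0 ord_max + delta) * s)) ->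
  w 1 = c2 ->
  (w s @[s --> +oo%R] --> (1 : R)) /\
  (exists C : R, \forall s \near +oo%R, `|w s - 1| <= C * s `^ (- alpha)).
Proof.
move=> Gcone _ Gpos _ fsmooth _ fincr _ _ [apos [fa1 _]] _ _ _ glevel g_cont _ _ delta0
  alpha alpha_gt1 w_ge1 _ w_ode _.
set K := 2 * a ord0 ord_max + delta.
have K_gt0 : 0 < K by have := apos ord_max; rewrite /K; lra.
have alpha_gt0 : 0 < alpha := lt_trans ltr01 alpha_gt1.
set h := fun x => g x - a ord0 ord0 * x.
have h_cont x : 1 < x -> {for x, continuous h}.
  move=> x1; apply: cvgB; last exact: cvgMr.
  have [+ _] := (continuous_within_itvcyP 1 g).1 g_cont.
  by apply; rewrite in_itv /= andbT.
have h_lt0 x : 1 < x -> h x < 0.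
  by move=> x1; rewrite subr_lt0 (g_lt_linear Gcone Gpos fsmooth fincr apos fa1 glevel).
have h_taylor := g_taylor_le Gcone Gpos fsmooth fincr apos fa1 glevel.
have f1_gt0 : 0 < partial ord0 f a by apply/fincr/Gpos.
have lamE : grad_dot f a / partial ord0 f a = alpha * K.
  by rewrite /alpha /K; field; rewrite !gt_eqF.
rewrite lamE in h_taylor.
split; first exact: w_cvg1 K_gt0 h_cont h_lt0 h_taylor w_ge1 w_ode.
exact: w_power_decay K_gt0 alpha_gt0 h_cont h_lt0 h_taylor w_ge1 w_ode.
Qed.
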